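(* Let $Q_k$ be a $K$-subset system and $\mathbb N=(N,\sigma)$ the natural numbers with the Scott topology of the usual order. Then: (1) $\mathbb N$ is $1^d$-special and $1^{wf}$-special; (2) $\overline D(\mathbb N)=\overline{KF}(\mathbb N)$, and $D(\mathbb N)=K(\mathbb N)=KF(\mathbb N)$; (3) $\mathbb N$ is $1^k$-special.
   Context: $Q(X)$: nonempty compact saturated subsets; filtered family: nonempty, any two members contain a third. A $K$-subset system $Q_k$ assigns to each $T_0$ space $X$ a set $Q_k(X)$ with $\{\uparrow x\mid x\in X\}\subseteq Q_k(X)\subseteq Q(X)$ such that continuous images of $k$-Rudin sets are $k$-Rudin, where a nonempty $A\subseteq X$ is $k$-Rudin if for some filtered $\mathcal K\subseteq Q_k(X)$, $\overline A$ is a minimal closed set meeting every member of $\mathcal K$. $\overline{KF}(X)$ denotes the $k$-Rudin sets for the choice $Q_k(X)=Q(X)$ (Rudin sets), and $\overline D(X)=\{A\subseteq X\mid \overline A=\overline D$ for some directed $D\subseteq X\}$. $K(X)$: classes of $k$-Rudin sets under $A\sim B\iff\overline A=\overline B$, open sets $U^*=\{[A]\mid A\cap U\ne\emptyset\}$. $D(X)$ and $KF(X)$ are $K(X)$ for $Q_k(X)=\{\uparrow x\mid x\in X\}$ and $Q_k(X)=Q(X)$ respectively (the equalities in (2) identify a class with the common closure of its members). Iterates: $K_0(X)=X$, $K_{\beta+1}(X)=K(K_\beta(X))$, unions at limits; $\mathrm{rank}_k(X)$ least $\alpha$ with $K_\alpha(X)\cong K_{\alpha+1}(X)$; $X$ is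 $\alpha^k$-special if $\mathrm{rank}_k(X)=\alpha$ and $\alpha$ is least with $K_\alpha(X)$ having a greatest element. The notions $D_\beta,\mathrm{rank}_d,\alpha^d$-special and $KF_\beta,\mathrm{rank}_{wf},\alpha^{wf}$-special are the same with $D$, resp. $KF$, in place of $K$. *)

(* a lightweight, explicit notion of topological space
   (a type together with its family of open sets), since the paper's
   constructions K(X) build new spaces functorially from old ones. *)
From Stdlib Require Import List Arith.



Definition pset (T : Type) := T -> Prop.

Record topsp := TopSp { pt :> Type; opn : pset (pset pt) }.

Section Top.
Variable X : topsp.

Definition subset (A B : pset X) := forall x, A x -> B x.

Definition is_topology : Prop :=
  opn X (fun _ => True) /\ opn X (fun _ => False) /\
  (forall U V, opn X U -> opn X V -> opn X (fun x => U x /\ V x)) /\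
  (forall F : pset (pset X), (forall U, F U -> opn X U) ->
     opn X (fun x => exists U, F U /\ U x)).

Definition T0 : Prop :=
  forall x y : X, x <> y ->
    exists U, opn X U /\ ((U x /\ ~ U y) \/ (U y /\ ~ U x)).

Definition T0space : Prop := is_topology /\ T0.

Definition closed (C : pset X) : Prop := opn X (fun x => ~ C x).

Definition closure (A : pset X) : pset X :=
  fun x => forall C, closed C -> subset A C -> C x.

Definition spec_le (x y : X) : Prop := closure (fun z => z = y) x.

Definition upset (A : pset X) : pset X :=
  fun y => exists x, A x /\ spec_le x y.

Definition saturated (A : pset X) : Prop :=
  forall x y, A x -> spec_le x y -> A y.

Definition compact (A : pset X) : Prop :=
  forall F : pset (pset X), (forall U, F U -> opn X U) ->
    subset A (fun x => exists U, F U /\ U x) ->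
    exists s : list (pset X), (forall U, In U s -> F U) /\
      subset A (fun x => exists U, In U s /\ U x).

Definition Qset : pset (pset X) :=
  fun K => (exists x, K x) /\ compact K /\ saturated K.

Definition filtered (KK : pset (pset X)) : Prop :=
  (exists K, KK K) /\
  forall K1 K2, KK K1 -> KK K2 ->
    exists K3, KK K3 /\ subset K3 K1 /\ subset K3 K2.

Definition meets (A B : pset X) : Prop := exists x, A x /\ B x.

Definition min_closed_meeting (KK : pset (pset X)) (C : pset X) : Prop :=
  closed C /\ (forall K, KK K -> meets C K) /\
  forall C', closed C' -> subset C' C -> (forall K, KK K -> meets C' K) ->
    subset C C'.

Definition kRudin (QX : pset (pset X)) (A : pset X) : Prop :=
  (exists x, A x) /\
  exists KK : pset (pset X), filtered KK /\ (forall K, KK K -> QX K) /\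
    min_closed_meeting KK (closure A).

Definition directed (D : pset X) : Prop :=
  (exists x, D x) /\
  forall x y, D x -> D y -> exists z, D z /\ spec_le x z /\ spec_le y z.

Definition Dbar : pset (pset X) :=
  fun A => exists D, directed D /\ forall x, closure A x <-> closure D x.

Definition has_greatest : Prop := exists g : X, forall x : X, spec_le x g.

End Top.

Arguments subset {X}.
Arguments closed {X}.
Arguments closure {X}.
Arguments spec_le {X}.
Arguments upset {X}.
Arguments saturated {X}.
Arguments compact {X}.
Arguments Qset {X}.
Arguments filtered {X}.
Arguments meets {X}.
Arguments min_closed_meeting {X}.
Arguments kRudin {X}.
Arguments directed {X}.
Arguments Dbar {X}.

Definition continuous {X Y : topsp} (f : X -> Y) : Prop :=
  forall V, opn Y V -> opn X (fun x => V (f x)).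

Definition homeomorphic (X Y : topsp) : Prop :=
  exists (f : X -> Y) (g : Y -> X),
    (forall x, g (f x) = x) /\ (forall y, f (g y) = y) /\
    continuous f /\ continuous g.

Definition image {X Y : Type} (f : X -> Y) (A : pset X) : pset Y :=
  fun y => exists x, A x /\ f x = y.

Definition subset_choice := forall X : topsp, pset (pset X).

Definition K_subset_system (Qk : subset_choice) : Prop :=
  (forall X : topsp, T0space X ->
     (forall x : X, Qk X (@upset X (fun z => z = x))) /\
     (forall K, Qk X K -> Qset K)) /\
  (forall (X Y : topsp) (f : X -> Y), T0space X -> T0space Y ->
     continuous f ->
     forall A, kRudin (Qk X) A -> kRudin (Qk Y) (image f A)).

Definition Qd : subset_choice :=
  fun X K => exists x : X, K = @upset X (fun z => z = x).
Definition Qwf : subset_choice := fun X => @Qset X.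

(* points of K(X): classes of k-Rudin sets, identified with their common
   closure *)
Definition Kpts (Qk : subset_choice) (X : topsp) : pset (pset X) :=
  fun C => exists A, kRudin (Qk X) A /\ C = closure A.

Definition Kspace (Qk : subset_choice) (X : topsp) : topsp :=
  @TopSp {C : pset X | Kpts Qk X C}
    (fun W => exists U, opn X U /\
       W = (fun c => exists x, proj1_sig c x /\ U x)).

Fixpoint Kiter (Qk : subset_choice) (n : nat) (X : topsp) : topsp :=
  match n with
  | 0 => X
  | S m => Kspace Qk (Kiter Qk m X)
  end.

(* X is 1^k-special: rank_k(X) = 1 (K_0 not ~= K_1, K_1 ~= K_2) and 1 is
   least with K_1(X) having a greatest element. *)
Definition one_special (Qk : subset_choice) (X : topsp) : Prop :=
  ~ homeomorphic (Kiter Qk 0 X) (Kiter Qk 1 X) /\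
  homeomorphic (Kiter Qk 1 X) (Kiter Qk 2 X) /\
  ~ has_greatest (Kiter Qk 0 X) /\ has_greatest (Kiter Qk 1 X).

Definition nat_directed (D : nat -> Prop) : Prop :=
  (exists n, D n) /\
  forall m n, D m -> D n -> exists k, D k /\ m <= k /\ n <= k.

Definition nat_is_sup (D : nat -> Prop) (s : nat) : Prop :=
  (forall d, D d -> d <= s) /\
  (forall t, (forall d, D d -> d <= t) -> s <= t).

Definition scott_open_nat (U : nat -> Prop) : Prop :=
  (forall m n, U m -> m <= n -> U n) /\
  (forall D s, nat_directed D -> nat_is_sup D s -> U s ->
     exists d, D d /\ U d).

Definition Nscott : topsp := @TopSp nat scott_open_nat.

(* The whole argument rests on one feature of N = (N, sigma): its
   specialization order is the usual order, hence total.  In a space X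
   whose specialization order is total, every nonempty set is directed,
   and every directed set is k-Rudin as soon as Q_k(X) contains the
   principal filters; since k-Rudin sets are nonempty by definition, the
   k-Rudin sets of X are exactly its nonempty subsets, whatever the choice
   of Q_k.  This gives part (2).  For parts (1) and (3) we show, for any
   nonempty space X with a total specialization order and no greatest
   element:
   - K(X) has a greatest element (the closure of X), so X is not
     homeomorphic to K(X), since homeomorphisms preserve the order;
   - every point of K(K(X)) is the closure of a point of K(X) (namely of
     the union of the sets involved), so K(X) is homeomorphic to K(K(X)). *)

From Stdlib Require Import Classical FunctionalExtensionality PropExtensionality
  ProofIrrelevance ClassicalEpsilon Arith Lia List.

Notation sing x := (fun z => z = x).

Lemma pset_ext {T : Type} (P Q : pset T) : (forall x, P x <-> Q x) -> P = Q.
Proof.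
  intros H; apply functional_extensionality; intro x.
  apply propositional_extensionality; auto.
Qed.

Section Closures.
Context {X : topsp}.

Lemma closed_compl_open (U : pset X) : opn X U -> closed (fun x => ~ U x).
Proof.
  intros HU; unfold closed.
  rewrite (pset_ext (fun x => ~ ~ U x) U); [exact HU|].
  intro x; split; [apply NNPP | tauto].
Qed.

Lemma subset_closure (A : pset X) : subset A (closure A).
Proof. intros x Hx C _ HAC; auto. Qed.

Lemma closure_least (A C : pset X) : closed C -> subset A C -> subset (closure A) C.
Proof. intros HC HAC x Hx; apply Hx; auto. Qed.

(* In a topology the closure is closed: its complement is the union of
   the complements of the closed supersets of A. *)
Lemma closure_closed (A : pset X) : is_topology X -> closed (closure A).
Proof.
  intros [_ [_ [_ Hunion]]]; unfold closed.
  set (F := fun U : pset X =>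
              exists C, closed C /\ subset A C /\ U = (fun x => ~ C x)).
  rewrite (pset_ext (fun x => ~ closure A x) (fun x => exists U, F U /\ U x)).
  - apply Hunion; intros U [C [HC [_ ->]]]; exact HC.
  - intro x; split.
    + intros Hn; apply NNPP; intro Hno; apply Hn; intros C HC HAC.
      apply NNPP; intro HCx; apply Hno.
      exists (fun x => ~ C x); split; [exists C |]; auto.
    + intros [U [[C [HC [HAC ->]]] HU]] Hcl; exact (HU (Hcl C HC HAC)).
Qed.

Lemma closure_meets_open (A U : pset X) (x : X) :
  opn X U -> closure A x -> U x -> meets A U.
Proof.
  intros HU Hx Ux; apply NNPP; intro Hn.
  apply (Hx (fun z => ~ U z) (closed_compl_open U HU)); auto.
  intros a Ha Ua; apply Hn; exists a; auto.
Qed.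

Lemma closure_of_open_meets (A : pset X) (x : X) :
  (forall U, opn X U -> U x -> meets A U) -> closure A x.
Proof.
  intros Hmeet C HC HAC; apply NNPP; intro HCx.
  destruct (Hmeet _ HC HCx) as [a [Ha HCa]]; exact (HCa (HAC a Ha)).
Qed.

Lemma closure_nonempty (A : pset X) (x : X) :
  is_topology X -> closure A x -> exists a, A a.
Proof.
  intros [Htop _] Hx.
  destruct (closure_meets_open A (fun _ => True) x Htop Hx I) as [a [Ha _]].
  eauto.
Qed.

Lemma spec_refl (x : X) : spec_le x x.
Proof. intros C _ H; apply H; reflexivity. Qed.

Lemma spec_trans (x y z : X) : spec_le x y -> spec_le y z -> spec_le x z.
Proof. intros Hxy Hyz C HC Hs; apply Hxy; auto; intros w ->; apply Hyz; auto. Qed.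

Lemma open_upward (U : pset X) (x y : X) : opn X U -> U x -> spec_le x y -> U y.
Proof.
  intros HU Ux Hxy; apply NNPP; intro Hy.
  apply (Hxy (fun z => ~ U z) (closed_compl_open U HU)); auto.
  intros z ->; exact Hy.
Qed.

Lemma closed_downward (C : pset X) (x y : X) : closed C -> C y -> spec_le x y -> C x.
Proof. intros HC Cy Hxy; apply Hxy; auto; intros z ->; exact Cy. Qed.

End Closures.

Definition contains_points {X : topsp} (Q : pset (pset X)) : Prop :=
  forall x : X, Q (upset (sing x)).

Definition total_space (X : topsp) : Prop := forall x y : X, spec_le x y \/ spec_le y x.

Section RudinSets.
Variable X : topsp.
Hypothesis X_top : is_topology X.

(* Directed sets are k-Rudin: the filtered family is that of the principal
   filters of the members of D, and a closed set meeting all of them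
   contains D by downward closure. *)
Lemma directed_kRudin (Q : pset (pset X)) (D : pset X) :
  contains_points Q -> directed D -> kRudin Q D.
Proof.
  intros HQ [Hne Hdir]; split; [exact Hne|].
  exists (fun K => exists d, D d /\ K = upset (sing d)); split; [|split].
  - split; [destruct Hne as [d Hd]; eauto|].
    intros K1 K2 [d1 [H1 ->]] [d2 [H2 ->]].
    destruct (Hdir d1 d2 H1 H2) as [d3 [H3 [L1 L2]]].
    exists (upset (sing d3)); split; [eauto|].
    split; intros y [z [-> Hz]]; eexists; split; try reflexivity; eapply spec_trans; eauto.
  - intros K [d [_ ->]]; apply HQ.
  - split; [apply closure_closed; exact X_top | split].
    + intros K [d [Hd ->]]; exists d; split; [apply subset_closure; exact Hd|].
      exists d; split; [reflexivity | apply spec_refl].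
    + intros C HC _ Hmeet; apply closure_least; [exact HC|].
      intros d Hd; destruct (Hmeet _ (ex_intro _ d (conj Hd eq_refl)))
        as [y [Cy [z [-> Hdy]]]].
      exact (closed_downward C d y HC Cy Hdy).
Qed.

Hypothesis X_total : total_space X.

Lemma total_directed (A : pset X) : (exists a, A a) -> directed A.
Proof.
  intros Hne; split; [exact Hne|].
  intros a1 a2 H1 H2; destruct (X_total a1 a2) as [L|L];
    [exists a2 | exists a1]; repeat split; auto; apply spec_refl.
Qed.

Lemma kRudin_iff_nonempty (Q : pset (pset X)) (A : pset X) :
  contains_points Q -> kRudin Q A <-> exists a, A a.
Proof.
  intros HQ; split; [intros [Hne _]; exact Hne|].
  intros Hne; apply directed_kRudin; [exact HQ | apply total_directed, Hne].
Qed.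

Lemma Dbar_iff_kRudin (Q : pset (pset X)) (A : pset X) :
  contains_points Q -> Dbar A <-> kRudin Q A.
Proof.
  intros HQ; rewrite (kRudin_iff_nonempty Q A HQ); split.
  - intros [D [[[d Hd] _] Hcl]].
    apply (closure_nonempty A d X_top), Hcl, subset_closure, Hd.
  - intros Hne; exists A; split; [apply total_directed, Hne | tauto].
Qed.

Lemma Kpts_independent (Q1 Q2 : subset_choice) (C : pset X) :
  contains_points (Q1 X) -> contains_points (Q2 X) -> Kpts Q1 X C <-> Kpts Q2 X C.
Proof.
  intros H1 H2; split; intros [A [HA ->]]; exists A; split; auto.
  - apply (kRudin_iff_nonempty _ A H2), (kRudin_iff_nonempty _ A H1), HA.
  - apply (kRudin_iff_nonempty _ A H1), (kRudin_iff_nonempty _ A H2), HA.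
Qed.

End RudinSets.

Section KSpace.
Variable Q : subset_choice.
Variable X : topsp.
Hypothesis X_top : is_topology X.

Lemma Kpt_nonempty (C : pset X) : Kpts Q X C -> exists x, C x.
Proof. intros [A [[[a Ha] _] ->]]; exists a; apply subset_closure, Ha. Qed.

Lemma Kpt_closed (C : pset X) : Kpts Q X C -> closed C.
Proof. intros [A [_ ->]]; apply closure_closed, X_top. Qed.

Lemma Kpt_ext (c d : Kspace Q X) :
  (forall x, proj1_sig c x <-> proj1_sig d x) -> c = d.
Proof.
  destruct c as [c pc], d as [d pd]; simpl; intros H.
  assert (c = d) by (apply pset_ext, H); subst d.
  f_equal; apply proof_irrelevance.
Qed.

Lemma K_open_inv (W : pset (Kspace Q X)) :
  opn (Kspace Q X) W ->
  exists U, opn X U /\ forall c, W c <-> meets (proj1_sig c) U.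
Proof. intros [U [HU ->]]; exists U; split; [exact HU | tauto]. Qed.

Lemma K_spec_of_subset (c d : Kspace Q X) :
  subset (proj1_sig c) (proj1_sig d) -> spec_le c d.
Proof.
  intros Hcd; apply closure_of_open_meets; intros W HW Wc.
  destruct (K_open_inv W HW) as [U [HU HWU]].
  exists d; split; [reflexivity|].
  apply HWU; apply HWU in Wc; destruct Wc as [x [cx Ux]].
  exists x; split; [apply Hcd|]; assumption.
Qed.

(* K(X) is T0: two distinct points differ at some x, and the complement of
   the closed set missing x gives a separating open set. *)
Lemma K_T0 : T0 (Kspace Q X).
Proof.
  intros c d Hcd.
  assert (Hx : exists x, ~ (proj1_sig c x <-> proj1_sig d x)).
  { apply NNPP; intro Hn; apply Hcd, Kpt_ext; intro x.
    apply NNPP; intro H; apply Hn; eauto. }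
  destruct Hx as [x Hx].
  assert (separate : forall e e' : Kspace Q X, proj1_sig e x -> ~ proj1_sig e' x ->
            exists U, opn (Kspace Q X) U /\ U e /\ ~ U e').
  { intros e e' ex ne'x.
    exists (fun f : Kspace Q X => exists y, proj1_sig f y /\ ~ proj1_sig e' y).
    split; [exists (fun y => ~ proj1_sig e' y); split; [apply Kpt_closed, (proj2_sig e') | reflexivity]|].
    split; [exists x; auto | intros [y [e'y ne'y]]; auto]. }
  destruct (classic (proj1_sig c x)) as [cx | ncx].
  - destruct (separate c d) as [U [HU [Uc nUd]]]; [tauto | tauto |].
    exists U; auto.
  - destruct (separate d c) as [U [HU [Ud nUc]]]; [tauto | tauto |].
    exists U; auto.
Qed.

Hypothesis X_total : total_space X.

(* K(X) is a topology; stability of the sets U^* under finite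
   intersections is where totality is used: a point meeting U and V meets
   U /\ V at the larger of the two witnesses. *)
Lemma K_topology : is_topology (Kspace Q X).
Proof.
  destruct X_top as [HT [HF [HI HU]]].
  split; [|split; [|split]].
  - exists (fun _ => True); split; [exact HT|].
    apply pset_ext; intro c; split; [|tauto].
    intros _; destruct (Kpt_nonempty _ (proj2_sig c)) as [x Hx]; eauto.
  - exists (fun _ => False); split; [exact HF|].
    apply pset_ext; intro c; split; [tauto | intros [x [_ []]]].
  - intros W1 W2 [U [HU1 ->]] [V [HV1 ->]].
    exists (fun x => U x /\ V x); split; [apply HI; assumption|].
    apply pset_ext; intro c; split.
    + intros [[x [cx Ux]] [y [cy Vy]]]; destruct (X_total x y) as [L|L].
      * exists y; repeat split; auto; eapply open_upward; eauto.
      * exists x; repeat split; auto; eapply open_upward; eauto.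
    + intros [x [cx [Ux Vx]]]; split; eauto.
  - intros F HFo.
    exists (fun x => exists U, (opn X U /\
              F (fun c : Kspace Q X => exists x, proj1_sig c x /\ U x)) /\ U x).
    split; [apply HU; intros U [H _]; exact H|].
    apply pset_ext; intro c; split.
    + intros [W [FW Wc]]; destruct (HFo W FW) as [U [HUo ->]].
      destruct Wc as [x [cx Ux]]; exists x; split; [|exists U]; auto.
    + intros [x [cx [U [[HUo FU] Ux]]]]; eexists; split; [exact FU | exists x; auto].
Qed.

(* The closure of the whole (nonempty) space is the greatest point of K(X). *)
Lemma K_greatest : contains_points (Q X) -> (exists x : X, True) -> has_greatest (Kspace Q X).
Proof.
  intros HQ [x0 _].
  assert (Htop : Kpts Q X (closure (fun _ => True))).
  { exists (fun _ => True); split; [|reflexivity].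
    apply kRudin_iff_nonempty; eauto. }
  exists (exist _ _ Htop); intro c; apply K_spec_of_subset.
  intros x _; apply subset_closure; exact I.
Qed.

(* Every point of K(K(X)) is the closure of a point of K(X): a k-Rudin set
   A of K(X) has the same closure as the single point given by the closure
   of the union of the members of A. *)
Lemma K_of_K_points_principal :
  contains_points (Q X) ->
  forall C, Kpts Q (Kspace Q X) C -> exists y, C = closure (sing y).
Proof.
  intros HQ C [A [[[a0 Ha0] _] ->]].
  set (U := fun x : X => exists c, A c /\ proj1_sig c x).
  assert (HUpt : Kpts Q X (closure U)).
  { exists U; split; [|reflexivity]; apply kRudin_iff_nonempty; auto.
    destruct (Kpt_nonempty _ (proj2_sig a0)) as [x Hx]; exists x, a0; auto. }
  set (y := exist _ (closure U) HUpt : Kspace Q X).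
  assert (Ay : closure A y).
  { apply closure_of_open_meets; intros W HW Wy.
    destruct (K_open_inv W HW) as [V [HV HWV]].
    apply HWV in Wy; destruct Wy as [x [Hx Vx]].
    destruct (closure_meets_open U V x HV Hx Vx) as [u [[c [Ac cu]] Vu]].
    exists c; split; [exact Ac | apply HWV; exists u; auto]. }
  exists y; apply pset_ext; intro e; split.
  - apply closure_least; [apply closure_closed, K_topology|].
    intros c Ac; apply K_spec_of_subset; intros x cx.
    apply subset_closure; exists c; auto.
  - apply closure_least; [apply closure_closed, K_topology|].
    intros z ->; exact Ay.
Qed.

End KSpace.

Section Sobriety.
Variable Q : subset_choice.
Variable Y : topsp.
Hypothesis Y_top : is_topology Y.
Hypothesis Y_T0 : T0 Y.
Hypothesis Y_points : contains_points (Q Y).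

Lemma closure_sing_inj (x y : Y) : closure (sing x) = closure (sing y) -> x = y.
Proof.
  intros E; apply NNPP; intro Hxy.
  destruct (Y_T0 x y Hxy) as [U [HU [[Ux nUy] | [Uy nUx]]]].
  - apply nUy; apply (open_upward U x y HU Ux).
    change (closure (sing y) x); rewrite <- E; apply spec_refl.
  - apply nUx; apply (open_upward U y x HU Uy).
    change (closure (sing x) y); rewrite E; apply spec_refl.
Qed.

Lemma closure_sing_Kpt (y : Y) : Kpts Q Y (closure (sing y)).
Proof.
  exists (sing y); split; [|reflexivity].
  apply directed_kRudin; [exact Y_top | exact Y_points|].
  split; [eauto | intros a1 a2 -> ->; exists y; repeat split; apply spec_refl].
Qed.

Lemma closure_sing_meets (U : pset Y) (y : Y) :
  opn Y U -> meets (closure (sing y)) U <-> U y.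
Proof.
  intros HU; split.
  - intros [x [Hxy Ux]]; exact (open_upward U x y HU Ux Hxy).
  - intros Uy; exists y; split; [apply spec_refl | exact Uy].
Qed.

(* If every point of K(Y) is the closure of a point, then y |-> cl{y}
   is a homeomorphism from Y onto K(Y). *)
Lemma homeomorphic_K_of_sober :
  (forall C, Kpts Q Y C -> exists y, C = closure (sing y)) ->
  homeomorphic Y (Kspace Q Y).
Proof.
  intros Hsober.
  set (f := fun y : Y => exist _ (closure (sing y)) (closure_sing_Kpt y) : Kspace Q Y).
  set (g := fun c : Kspace Q Y =>
              proj1_sig (constructive_indefinite_description _ (Hsober _ (proj2_sig c)))).
  assert (g_spec : forall c, proj1_sig c = closure (sing (g c))).
  { intro c; unfold g; destruct constructive_indefinite_description; assumption. }
  exists f, g; split; [|split; [|split]].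
  - intro y; apply closure_sing_inj; symmetry; exact (g_spec (f y)).
  - intro c; apply Kpt_ext; intro x; simpl; rewrite (g_spec c); tauto.
  - intros V [U [HU ->]]; simpl.
    rewrite (pset_ext _ U); [exact HU|].
    intro y; apply closure_sing_meets, HU.
  - intros U HU; exists U; split; [exact HU|].
    apply pset_ext; intro c; rewrite (g_spec c).
    symmetry; apply closure_sing_meets, HU.
Qed.

End Sobriety.

Lemma continuous_monotone (X Y : topsp) (f : X -> Y) (x y : X) :
  continuous f -> spec_le x y -> spec_le (f x) (f y).
Proof.
  intros Hf Hxy C HC Hs; apply (Hxy (fun z => C (f z))).
  - exact (Hf _ HC).
  - intros z ->; apply Hs; reflexivity.
Qed.

Lemma greatest_not_homeomorphic (X Y : topsp) :
  has_greatest Y -> ~ has_greatest X -> ~ homeomorphic X Y.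
Proof.
  intros [t Ht] Hn [f [g [gf [_ [_ cg]]]]]; apply Hn; exists (g t).
  intro x; rewrite <- (gf x); apply continuous_monotone; auto.
Qed.

Lemma one_special_of_total (Q : subset_choice) (X : topsp) :
  is_topology X -> total_space X -> (exists x : X, True) -> ~ has_greatest X ->
  contains_points (Q X) -> contains_points (Q (Kspace Q X)) ->
  one_special Q X.
Proof.
  intros Htop Htot Hne Hnogr HQ0 HQ1.
  assert (KX_greatest : has_greatest (Kspace Q X)) by (apply K_greatest; auto).
  split; [|split; [|split]]; simpl.
  - apply greatest_not_homeomorphic; assumption.
  - apply homeomorphic_K_of_sober; [apply K_topology | apply K_T0 | |
      apply K_of_K_points_principal]; assumption.
  - exact Hnogr.
  - exact KX_greatest.
Qed.

(* Up-sets [k, oo) are Scott open: a directed set whose supremum is at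
   least k must contain an element at least k. *)
Lemma Nscott_up_open (k : nat) : opn Nscott (fun n => k <= n).
Proof.
  split; [intros a b Ha Hab; lia|].
  intros D s [[d0 Hd0] _] [_ Hlub] Hks; destruct k as [|k].
  - exists d0; split; [exact Hd0 | lia].
  - apply NNPP; intro Hn.
    assert (s <= k); [|lia].
    apply Hlub; intros d Dd; apply NNPP; intro Hd; apply Hn; exists d; split; auto; lia.
Qed.

Lemma Nscott_topology : is_topology Nscott.
Proof.
  split; [|split; [|split]].
  - split; [auto | intros D s [[d Hd] _] _ _; eauto].
  - split; [tauto | intros D s _ _ []].
  - intros U V [HU1 HU2] [HV1 HV2]; split.
    + intros a b [Ua Va] Hab; split; eauto.
    + intros D s HD Hsup [Us Vs].
      destruct (HU2 D s HD Hsup Us) as [d1 [D1 U1]].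
      destruct (HV2 D s HD Hsup Vs) as [d2 [D2 V2]].
      destruct (proj2 HD d1 d2 D1 D2) as [k [Dk [L1 L2]]].
      exists k; split; [|split]; eauto.
  - intros F HF; split.
    + intros a b [U [FU Ua]] Hab; exists U; split; [|apply (proj1 (HF U FU) a b)]; auto.
    + intros D s HD Hsup [U [FU Us]].
      destruct (proj2 (HF U FU) D s HD Hsup Us) as [d [Dd Ud]]; eauto.
Qed.

(* The specialization order of the Scott topology on N is the usual order;
   one direction uses that the down-set of n is closed, being the
   complement of [n + 1, oo). *)
Lemma Nscott_spec_le (m n : nat) : @spec_le Nscott m n <-> m <= n.
Proof.
  split.
  - intros H; apply (H (fun k => k <= n)); [|intros z ->; lia].
    unfold closed; rewrite (pset_ext _ (fun k => S n <= k)); [apply Nscott_up_open|].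
    intro k; lia.
  - intros Hle C HC Hs; apply NNPP; intro Hm.
    apply (proj1 HC m n Hm Hle), Hs; reflexivity.
Qed.

Lemma Nscott_T0space : T0space Nscott.
Proof.
  split; [exact Nscott_topology|]; intros x y Hxy.
  destruct (Nat.lt_total x y) as [L | [E | L]]; [| contradiction |].
  - exists (fun n => y <= n); split; [apply Nscott_up_open | right; simpl; lia].
  - exists (fun n => x <= n); split; [apply Nscott_up_open | left; simpl; lia].
Qed.

Lemma Nscott_total : total_space Nscott.
Proof.
  intros x y; rewrite !Nscott_spec_le; lia.
Qed.

Lemma Nscott_no_greatest : ~ has_greatest Nscott.
Proof. intros [g Hg]; specialize (Hg (S g)); rewrite Nscott_spec_le in Hg; lia. Qed.

Lemma Qd_points (X : topsp) : contains_points (Qd X).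
Proof. intro x; exists x; reflexivity. Qed.

Lemma Qwf_points (X : topsp) : contains_points (Qwf X).
Proof.
  intro x; split; [|split].
  - exists x, x; split; [reflexivity | apply spec_refl].
  - intros F HF Hcov.
    destruct (Hcov x (ex_intro _ x (conj eq_refl (spec_refl x)))) as [U [FU Ux]].
    exists (U :: nil); split; [intros V [<- | []]; exact FU|].
    intros y [z [-> Hxy]]; exists U; split; [left; reflexivity|].
    exact (open_upward U x y (HF U FU) Ux Hxy).
  - intros y w [z [-> Hxy]] Hyw; exists x; split; [reflexivity | eapply spec_trans; eauto].
Qed.

Lemma Nscott_one_special (Q : subset_choice) :
  contains_points (Q Nscott) -> contains_points (Q (Kspace Q Nscott)) ->
  one_special Q Nscott.
Proof.
  apply one_special_of_total;
    [exact Nscott_topology | exact Nscott_total | exists 0; exact I | exact Nscott_no_greatest].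
Qed.

Theorem mainTheorem10 (Qk : subset_choice) (HQk : K_subset_system Qk) :
  (one_special Qd Nscott /\ one_special Qwf Nscott) /\
  ((forall A : pset Nscott, Dbar A <-> kRudin (Qwf Nscott) A) /\
   (forall C : pset Nscott, Kpts Qd Nscott C <-> Kpts Qk Nscott C) /\
   (forall C : pset Nscott, Kpts Qk Nscott C <-> Kpts Qwf Nscott C)) /\
  one_special Qk Nscott.
Proof.
  assert (Qk_points : forall X : topsp, T0space X -> contains_points (Qk X))
    by (intros X HX; exact (proj1 (proj1 HQk X HX))).
  assert (Qk_N : contains_points (Qk Nscott)) by exact (Qk_points _ Nscott_T0space).
  assert (Qk_KN : contains_points (Qk (Kspace Qk Nscott))).
  { apply Qk_points; split;
      [apply K_topology | apply K_T0]; auto using Nscott_topology, Nscott_total. }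
  split; [split | split; [split; [|split] |]].
  - apply Nscott_one_special; apply Qd_points.
  - apply Nscott_one_special; apply Qwf_points.
  - intro A; apply Dbar_iff_kRudin;
      [exact Nscott_topology | exact Nscott_total | apply Qwf_points].
  - intro C; apply Kpts_independent;
      [exact Nscott_topology | exact Nscott_total | apply Qd_points | exact Qk_N].
  - intro C; apply Kpts_independent;
      [exact Nscott_topology | exact Nscott_total | exact Qk_N | apply Qwf_points].
  - apply Nscott_one_special; assumption.
Qed.
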